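(* Let $\mathcal{X}$ be an arbitrary (unknown) distribution over passwords and let $pwd^1,\ldots,pwd^N$ be $N$ independent samples from $\mathcal{X}$ (the users' passwords). Let $pwd_1,pwd_2,\ldots$ be the distinct passwords appearing in the sample, with $f_i$ the number of samples equal to $pwd_i$, sorted so that $f_i\ge f_{i+1}$. Let $k>0$ be the cost of one password guess, $V>0$ the value of a cracked password, $L>0$, and $j\ge 1$ an integer. If $\frac{V}{k}\ge NL$ and $a=1$, then a rational adversary will crack at least \[ \sum_{i: f_i\geq j} f_i - \frac{N}{(j-1)!\,L^{j-1}} \] of the $N$ user passwords, in expectation (over the draw of the $N$ samples).
   Context: Attacker model: an offline attacker who knows the true distribution $\mathcal{X}$ (but not which password a given user chose) guesses passwords in decreasing order of true probability $q_1\ge q_2\ge\cdots$, each guess costing $k$. For threshold $t$ (guessing the $t$ most likely passwords) the expected reward is $R(t)=V\,(\sum_{m=1}^t q_m)^a$ with $a=1$ here (no diminishing returns), and the marginal cost of the $t$-th guess is $MC(t)=k(1-\sum_{m=1}^{t-1}q_m)$; the marginal revenue is $MR(t)=V q_t$. A rational adversary continues guessing as long as marginal revenue is at least marginal cost and stops otherwise. A user password is cracked if it is among the attacker's guesses. *)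

From HB Require Import structures.
From mathcomp Require Import all_boot all_order all_algebra.
From mathcomp Require Import all_classical all_reals all_analysis.
Set Implicit Arguments. Unset Strict Implicit. Unset Printing Implicit Defensive.
Import Order.TTheory GRing.Theory Num.Theory.
Local Open Scope ring_scope.
Local Open Scope classical_set_scope.

(* Passwords are labelled by nat, in the attacker's guessing order:
   password m is the (m+1)-th guess, and q m is its true probability
   (q is assumed nonincreasing in the theorem). *)

(* Marginal revenue of guess number m (0-based), with a = 1. *)
Definition MR (R : realType) (V : R) (q : nat -> R) (m : nat) : R := V * q m.

Definition MC (R : realType) (k : R) (q : nat -> R) (m : nat) : R :=
  k * (1 - \sum_(i < m) q i).

(* A rational adversary keeps guessing while MR >= MC and stops at the first
   guess where MR < MC: password m is guessed (cracked) iff every guess up to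
   and including m satisfies MR >= MC. *)
Definition cracked (R : realType) (k V : R) (q : nat -> R) (m : nat) : Prop :=
  forall s, (s <= m)%N -> MC k q s <= MR V q s.

Definition sample (N : nat) := {ffun 'I_N -> nat}.

Definition freq (N : nat) (x : sample N) (p : nat) : nat :=
  #|[set i : 'I_N | x i == p]|.

Definition distinct_pwds (N : nat) (x : sample N) : seq nat :=
  undup [seq x i | i <- enum 'I_N].

Definition freq_mass (j N : nat) (x : sample N) : nat :=
  \sum_(p <- distinct_pwds x | (j <= freq x p)%N) freq x p.

Definition cracked_count (R : realType) (k V : R) (q : nat -> R) (N : nat)
  (x : sample N) : nat :=
  #|[set i : 'I_N | `[< cracked k V q (x i) >] ]|.

Definition expect (R : realType) (q : nat -> R) (N : nat) (g : sample N -> nat)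
  : \bar R :=
  \esum_(x in [set: sample N]) ((\prod_(i < N) q (x i)) * (g x)%:R)%:E.

From HB Require Import structures.
From mathcomp Require Import all_boot all_order all_algebra.
From mathcomp Require Import all_classical all_reals all_analysis.
From mathcomp Require Import ring.
Import Order.TTheory GRing.Theory Num.Theory.
Set Implicit Arguments. Unset Strict Implicit.
Local Open Scope ring_scope.

(* Each user password counted by freq_mass is either cracked or an uncracked
   password p of sample frequency f_p >= j.  The adversary leaves p uncracked
   only after stopping at some guess s <= p with V q_s < k (1 - sum_(i<s) q_i)
   <= k, so q_p <= k / V <= 1 / (N L).  For such p, f_p [f_p >= j] <= j C(f_p, j),
   and C(f_p, j) counts the j-sets of users that all chose p, hence
   E[f_p [f_p >= j]] <= j C(N, j) q_p^j <= q_p N (N q_p)^(j-1) / (j-1)!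
   <= q_p N / ((j-1)! L^(j-1)); summing over p uses sum_p q_p <= 1.
   The expectation over the infinitely many samples is a supremum of finite
   sums, each dominated by the sum over the finitely many samples whose values
   lie below some bound M. *)

Lemma leq_mul_bin f j : (0 < j)%N -> (j <= f)%N -> (f <= j * 'C(f, j))%N.
Proof.
case: j => // j _ jf; rewrite -mul_bin_diag leq_pmulr // bin_gt0.
by case: f jf.
Qed.

Lemma card_frequent_le (I T : finType) (U : pred T) (j : nat) (y : {ffun I -> T}) :
  (0 < j)%N ->
  (#|[set i | U (y i) & j <= #|[set l | y l == y i]|]|
     <= j * \sum_(p | U p) 'C(#|[set i | y i == p]|, j))%N.
Proof.
move=> j_gt0; rewrite -sum1_card (partition_big y U) /=; last first.
  by move=> i; rewrite inE => /andP[].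
rewrite big_distrr /=; apply: leq_sum => p Up.
have [jp | pj] := leqP j #|[set i | y i == p]|.
  apply: leq_trans _ (leq_mul_bin j_gt0 jp); rewrite sum1dep_card.
  by apply: subset_leq_card; rewrite setIdE subsetIr.
by rewrite big1 // => i /andP[+ /eqP yip]; rewrite inE yip leqNgt pj andbF.
Qed.

Section FiniteSampling.
Variables (R : realFieldType) (I T : finType) (w : T -> R).
Hypotheses (w_ge0 : forall t, 0 <= w t) (sum_w_le1 : \sum_t w t <= 1).

Lemma expect_subset_fiber_le (S : {set I}) (p : T) :
  \sum_(y : {ffun I -> T}) (\prod_i w (y i)) * (S \subset [set i | y i == p])%:R
    <= w p ^+ #|S|.
Proof.
(* The sum factorizes over users: a user in S contributes w p, any other
   user at most sum_t w t <= 1. *)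
pose h i t := w t * (if i \in S then (t == p)%:R else 1).
have -> : \sum_(y : {ffun I -> T}) (\prod_i w (y i)) * (S \subset [set i | y i == p])%:R
        = \sum_(y : {ffun I -> T}) \prod_i h i (y i).
  apply: eq_bigr => y _; rewrite big_split /=; congr (_ * _).
  have [/fintype.subsetP Sp | /subsetPn[i iS yip]] := boolP (S \subset _).
    by rewrite big1 // => i _; case: ifP => // /Sp; rewrite inE => ->.
  by rewrite (bigD1 i) //= iS; move: yip; rewrite inE => /negPf ->; rewrite mul0r.
rewrite -bigA_distr_bigA /= -prodr_const [leRHS]big_mkcond /=.
apply: ler_prod => i _; apply/andP; split.
  by apply: sumr_ge0 => t _; rewrite mulr_ge0 //; case: ifP.
rewrite /h; case: ifP => iS.
  rewrite (bigD1 p) //= eqxx mulr1 big1 ?addr0 // => t /negPf ->.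
  by rewrite mulr0.
by under eq_bigr do rewrite mulr1.
Qed.

Lemma expect_binomial_fiber_le (p : T) (j : nat) :
  \sum_(y : {ffun I -> T}) (\prod_i w (y i)) * 'C(#|[set i | y i == p]|, j)%:R
    <= 'C(#|I|, j)%:R * w p ^+ j.
Proof.
have binE (B : {set I}) :
    'C(#|B|, j)%:R = \sum_(S : {set I} | #|S| == j) (S \subset B)%:R :> R.
  rewrite -cards_draws -sum1_card natr_sum [RHS]big_mkcond [LHS]big_mkcond /=.
  by apply: eq_bigr => S _; rewrite inE andbC; case: (_ == j); case: (_ \subset _).
under eq_bigr do rewrite binE mulr_sumr.
rewrite exchange_big /=.
apply: (@le_trans _ _ (\sum_(S : {set I} | #|S| == j) w p ^+ j)).
  by apply: ler_sum => S /eqP <-; exact: expect_subset_fiber_le.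
by rewrite sumr_const -cardsE card_draws mulr_natl.
Qed.

Lemma expect_card_frequent_le (U : pred T) (j : nat) : (0 < j)%N ->
  \sum_(y : {ffun I -> T}) (\prod_i w (y i)) *
      #|[set i | U (y i) & (j <= #|[set l | y l == y i]|)%N]|%:R
    <= j%:R * 'C(#|I|, j)%:R * \sum_(p | U p) w p ^+ j.
Proof.
move=> j_gt0.
have weight_ge0 (y : {ffun I -> T}) : 0 <= \prod_i w (y i) by apply: prodr_ge0.
apply: (@le_trans _ _ (\sum_(y : {ffun I -> T}) (\prod_i w (y i)) *
    (j * \sum_(p | U p) 'C(#|[set i | y i == p]|, j))%N%:R)).
  by apply: ler_sum => y _; rewrite ler_wpM2l // ler_nat card_frequent_le.
under eq_bigr do rewrite natrM natr_sum mulrCA mulr_sumr.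
rewrite -mulr_sumr exchange_big -mulrA ler_wpM2l // mulr_sumr.
by apply: ler_sum => p _; exact: expect_binomial_fiber_le.
Qed.

End FiniteSampling.

Lemma ffact_leq_expn n m : (n ^_ m <= n ^ m)%N.
Proof.
rewrite ffact_prod (@leq_trans (\prod_(i < m) n)) //.
  by apply: leq_prod => i _; exact: leq_subr.
by rewrite prod_nat_const card_ord.
Qed.

Lemma mul_bin_fact_leq_expn n j : (0 < j)%N -> (j * 'C(n, j) * j.-1`! <= n ^ j)%N.
Proof.
case: j => // j _ /=; rewrite mulnAC -factS mulnC bin_ffact; exact: ffact_leq_expn.
Qed.

Lemma mul_bin_expr_le (R : realFieldType) (N j : nat) (L x : R) :
  (0 < j)%N -> 0 < L -> 0 <= x -> x * (N%:R * L) <= 1 ->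
  j%:R * 'C(N, j)%:R * x ^+ j <= x * (N%:R / (j.-1`!%:R * L ^+ j.-1)).
Proof.
case: j => // j _ L_gt0 x_ge0 xNL_le1 /=.
have den_gt0 : 0 < j`!%:R * L ^+ j by rewrite mulr_gt0 ?ltr0n ?fact_gt0 ?exprn_gt0.
rewrite mulrA ler_pdivlMr //.
have -> : j.+1%:R * 'C(N, j.+1)%:R * x ^+ j.+1 * (j`!%:R * L ^+ j)
        = (j.+1 * 'C(N, j.+1) * j`!)%N%:R * (x * (x * L) ^+ j).
  by rewrite !natrM exprMn exprS; ring.
apply: (@le_trans _ _ ((N ^ j.+1)%N%:R * (x * (x * L) ^+ j))).
  by rewrite ler_wpM2r ?ler_nat ?mul_bin_fact_leq_expn // mulr_ge0 // exprn_ge0 // mulr_ge0 // ltW.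
have -> : (N ^ j.+1)%N%:R * (x * (x * L) ^+ j) = x * N%:R * (x * (N%:R * L)) ^+ j.
  by rewrite natrX exprS !exprMn; ring.
by rewrite -[leRHS]mulr1 ler_wpM2l ?mulr_ge0 // exprn_ile1 // mulr_ge0 // mulr_ge0 // ltW.
Qed.

Section RationalAdversary.
Variables (R : realType) (k V : R) (q : nat -> R).
Hypotheses (q_ge0 : forall m, 0 <= q m) (q_nonincr : forall m, q m.+1 <= q m).
Hypotheses (k_gt0 : 0 < k) (V_gt0 : 0 < V).

Lemma not_cracked_lt p : ~ cracked k V q p -> V * q p < k.
Proof.
move=> /existsPNP[s sp /negP]; rewrite -ltNge /MR /MC => stop_s.
have q_ps : q p <= q s by exact: (nonincreasing_seqP q).1 q_nonincr s p sp.
have partial_ge0 : 0 <= \sum_(i < s) q i by apply: sumr_ge0.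
apply: (@le_lt_trans _ _ (V * q s)) (lt_le_trans stop_s _).
  by rewrite ler_pM2l.
by rewrite mulrBr mulr1 gerBl mulr_ge0 // ltW.
Qed.

Lemma not_cracked_mul_le1 (c : R) p : c <= V / k -> ~ cracked k V q p -> q p * c <= 1.
Proof.
move=> c_le /not_cracked_lt Vq_lt.
apply: le_trans (ler_wpM2l (q_ge0 p) c_le) _.
by rewrite mulrA ler_pdivrMr // mul1r mulrC ltW.
Qed.

End RationalAdversary.

Lemma sum_ord_le_esumT (R : realType) (q : nat -> R) (M : nat) :
  (forall m, 0 <= q m) ->
  (\sum_(m < M) (q m)%:E <= \esum_(m in [set: nat]) (q m)%:E)%E.
Proof.
move=> q_ge0; rewrite -nneseries_esumT => [|m]; last by rewrite lee_fin.
rewrite -(big_mkord xpredT (fun m => (q m)%:E)).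
by apply: nneseries_lim_ge => m _ _; rewrite lee_fin.
Qed.

Section Expectation.
Variables (R : realType) (q : nat -> R) (N : nat).
Hypothesis q_ge0 : forall m, 0 <= q m.

Let weight_ge0 (x : sample N) : 0 <= \prod_i q (x i).
Proof. exact: prodr_ge0. Qed.

Lemma expect_le_add (g g1 g2 : sample N -> nat) :
  (forall x, g x <= g1 x + g2 x)%N ->
  (expect q g <= expect q g1 + expect q g2)%E.
Proof.
move=> g_le; rewrite /expect -esumD => [|x _|x _]; last 2 first.
- by rewrite lee_fin mulr_ge0.
- by rewrite lee_fin mulr_ge0.
apply: le_esum => x _; rewrite -EFinD lee_fin -mulrDr -natrD.
by rewrite ler_wpM2l // ler_nat.
Qed.

Definition sample_of {M : nat} (y : {ffun 'I_N -> 'I_M}) : sample N :=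
  [ffun i => nat_of_ord (y i)].

Lemma sum_le_sum_sample_of (F : sample N -> R) (s : seq (sample N)) :
  uniq s -> (forall x, 0 <= F x) ->
  exists M, \sum_(x <- s) F x <= \sum_(y : {ffun 'I_N -> 'I_M}) F (sample_of y).
Proof.
move=> s_uniq F_ge0.
pose M := (\max_(x <- s) \max_(i < N) x i).+1.
exists M.
have x_lt_M x i : x \in s -> (x i < M)%N.
  move=> xs; rewrite ltnS (@leq_trans (\max_(i < N) x i)) ?leq_bigmax //.
  by rewrite (big_rem x xs) leq_maxl.
pose g (x : sample N) : {ffun 'I_N -> 'I_M} := [ffun i => inord (x i)].
have gK x : x \in s -> sample_of (g x) = x.
  by move=> xs; apply/ffunP => i; rewrite !ffunE inordK ?x_lt_M.
rewrite (eq_big_seq (F \o sample_of \o g)) => [|x xs]; last by rewrite /= gK.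
rewrite -(big_map g xpredT (F \o sample_of)).
have gs_uniq : uniq (map g s).
  rewrite map_inj_in_uniq // => x1 x2 x1s x2s g_eq.
  by rewrite -(gK _ x1s) -(gK _ x2s) g_eq.
rewrite big_uniq //= [leRHS](bigID (mem (map g s))) /= lerDl.
by apply: sumr_ge0.
Qed.

Lemma expect_le_bounded (g : sample N -> nat) (c : R) :
  (forall M, \sum_(y : {ffun 'I_N -> 'I_M}) (\prod_i q (y i)) * (g (sample_of y))%:R <= c) ->
  (expect q g <= c%:E)%E.
Proof.
move=> bounded; rewrite /expect /esum; apply: ge_ereal_sup => _ [X [finX _] <-].
rewrite fsbig_finite //= sumEFin lee_fin.
have [M sum_le] := sum_le_sum_sample_of (finmap.fset_uniq (fset_set X))
  (fun x => mulr_ge0 (weight_ge0 x) (ler0n _ (g x))).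
apply: le_trans sum_le (le_trans _ (bounded M)).
by under eq_bigr do under eq_bigr do rewrite ffunE.
Qed.
End Expectation.

Lemma freq_count_mem N (x : sample N) p :
  freq x p = count_mem p [seq x i | i <- enum 'I_N].
Proof.
rewrite /freq count_map cardE /enum_mem size_filter.
rewrite (@eq_filter _ _ predT) // filter_predT.
by apply: eq_count => i; apply/idP/idP; rewrite in_setE.
Qed.

Lemma freq_mass_card j N (x : sample N) :
  freq_mass j x = #|[set i | (j <= freq x (x i))%N]|.
Proof.
rewrite /freq_mass /distinct_pwds -sum1dep_card.
have -> : (\sum_(i | j <= freq x (x i)) 1 = \sum_(i <- enum 'I_N | j <= freq x (x i)) 1)%N.
  by rewrite big_enum_cond.
rewrite -(big_map x (fun p => (j <= freq x p)%N) (fun=> 1%N)).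
rewrite -[in RHS]big_undup_iterop_count; apply: eq_bigr => p _.
by rewrite Monoid.iteropE iter_addn_0 mul1n freq_count_mem.
Qed.

Definition uncracked_frequent_count (R : realType) (k V : R) (q : nat -> R) (j N : nat)
  (x : sample N) : nat :=
  #|[set i | ~~ `[< cracked k V q (x i) >] & (j <= freq x (x i))%N]|.

Lemma freq_mass_le_cracked_add (R : realType) (k V : R) (q : nat -> R) j {N} (x : sample N) :
  (freq_mass j x <= cracked_count k V q x + uncracked_frequent_count k V q j x)%N.
Proof.
rewrite freq_mass_card /cracked_count /uncracked_frequent_count.
rewrite -(cardsID [set i | `[< cracked k V q (x i) >]]) leq_add //.
  by apply: subset_leq_card; apply/fintype.subsetP => i; rewrite !inE => /andP[].
by apply: eq_leq; apply: eq_card => i; rewrite !inE andbC.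
Qed.

Lemma expect_uncracked_frequent_le (R : realType) (q : nat -> R) (N j : nat) (k V L : R) :
  (forall m, 0 <= q m) ->
  (\esum_(m in [set: nat]) (q m)%:E = 1)%E ->
  (forall m, q m.+1 <= q m) ->
  0 < k -> 0 < V -> 0 < L -> (0 < j)%N ->
  N%:R * L <= V / k ->
  (expect q (@uncracked_frequent_count R k V q j N)
     <= (N%:R / ((j.-1)`!%:R * L ^+ j.-1))%:E)%E.
Proof.
move=> q_ge0 q_sum1 q_nonincr k_gt0 V_gt0 L_gt0 j_gt0 NL_le.
set c := N%:R / _.
have c_ge0 : 0 <= c by rewrite divr_ge0 // mulr_ge0 // exprn_ge0 // ltW.
apply: expect_le_bounded => // M.
have sum_le1 : \sum_(t : 'I_M) q t <= 1.
  by have := sum_ord_le_esumT M q_ge0; rewrite q_sum1 sumEFin lee_fin.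
pose U (t : 'I_M) := ~~ `[< cracked k V q t >].
have countE (y : {ffun 'I_N -> 'I_M}) : uncracked_frequent_count k V q j (sample_of y)
    = #|[set i | U (y i) & (j <= #|[set l | y l == y i]|)%N]|.
  apply: eq_card => i; rewrite !inE !ffunE /freq; congr (_ && (j <= _)%N).
  by apply: eq_card => l; rewrite inE; apply/idP/idP; rewrite in_setE /= ffunE.
under eq_bigr do rewrite countE.
apply: le_trans (expect_card_frequent_le 'I_N (fun t : 'I_M => q_ge0 t) sum_le1 U j_gt0) _.
rewrite card_ord mulr_sumr.
apply: (@le_trans _ _ (\sum_(p : 'I_M | U p) q p * c)).
  apply: ler_sum => p /negP Up; apply: mul_bin_expr_le => //.
  apply: (not_cracked_mul_le1 q_ge0 q_nonincr k_gt0 V_gt0 NL_le) => crk.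
  by apply: Up; apply/asboolP.
rewrite -mulr_suml ler_piMl //; apply: le_trans sum_le1.
by rewrite [leRHS](bigID U) /= lerDl sumr_ge0.
Qed.

Theorem theorem2 (R : realType) (q : nat -> R) (N j : nat) (k V L : R) :
  (forall m, 0 <= q m) ->
  (\esum_(m in [set: nat]) (q m)%:E = 1)%E ->
  (forall m, q m.+1 <= q m) ->
  0 < k -> 0 < V -> 0 < L -> (1 <= j)%N ->
  N%:R * L <= V / k ->
  (expect q (fun x : sample N => freq_mass j x)
     - (N%:R / ((j.-1)`!%:R * L ^+ j.-1))%:E
   <= expect q (fun x : sample N => cracked_count k V q x))%E.
Proof.
move=> q_ge0 q_sum1 q_nonincr k_gt0 V_gt0 L_gt0 j_gt0 NL_le.
rewrite leeBlDr //.
apply: le_trans (expect_le_add q_ge0 (freq_mass_le_cracked_add k V q j)) _.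
by rewrite leeD2l // expect_uncracked_frequent_le.
Qed.
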